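(* Let $n\ge 2$, let $H(t)$, $0\le t\le T$, be a piecewise-continuous U(1)-invariant Hamiltonian on $n$ qubits, and let $1\le k\le n$, let $i_1,\dots,i_k$ be $k$ distinct qubits and $a(t)$ a real piecewise-continuous function. Let $\Delta_3$ and $\Delta_3'$ denote the phases of the unitaries generated by $H(t)$ and by $H'(t)=H(t)+a(t)\,Z_{i_1}Z_{i_2}\cdots Z_{i_k}$, respectively. Then $\Delta_3'=\Delta_3\pmod{2\pi}$ if $k$ is even, and $$\Delta_3'=\Delta_3-4(k-1)\int_0^T a(t)\,dt \pmod{2\pi}$$ if $k$ is odd.
   Context: Qubits $1,\dots,n$, Hilbert space $(\mathbb{C}^2)^{\otimes n}$, $Z_j$ the Pauli $Z$ on qubit $j$. For $m=0,\dots,n$, $\Pi_m$ is the projector onto the span of computational basis states with exactly $m$ qubits in state $|1\rangle$. A Hamiltonian is U(1)-invariant if it commutes with $\sum_j Z_j$ (note $Z_{i_1}\cdots Z_{i_k}$ is U(1)-invariant). For a U(1)-invariant $H(t)$, $V=\mathcal{T}\exp(-i\int_0^T H(t)dt)$ (time-ordered exponential) satisfies $V=\bigoplus_{m=0}^n V_m$ with $V_m$ the restriction of $V$ to the range of $\Pi_m$; define $\theta_m=\arg\det(V_m)\in(-\pi,\pi]$ and $\Delta_3=\theta_{n-1}-\theta_1-(n-2)(\theta_n-\theta_0)\pmod{2\pi}$. *)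

From Stdlib Require Import Reals ClassicalEpsilon List.
From mathcomp Require Import all_boot all_algebra.
From mathcomp Require Import Rstruct.
From mathcomp.real_closed Require Import complex.
From Coquelicot Require Import Coquelicot.

Set Implicit Arguments.
Unset Strict Implicit.
Unset Printing Implicit Defensive.

Local Open Scope ring_scope.
Local Open Scope complex_scope.

Notation C := (R[i]).

(* Operators on n qubits: matrices indexed by the 2^n computational basis
   states 'I_(2^n); basis state x has qubit j (j : 'I_n) in state |1> iff
   the j-th binary digit of x is 1. *)
Notation Op n := ('M[C]_(2 ^ n)).

Definition bit (n : nat) (x : 'I_(2 ^ n)) (j : 'I_n) : bool := odd (x %/ 2 ^ j).

Definition weight (n : nat) (x : 'I_(2 ^ n)) : nat := \sum_(j < n) bit x j.

Definition PauliZ (n : nat) (j : 'I_n) : Op n :=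
  diag_mx (\row_(x < 2 ^ n) (if bit x j then -1 else 1)).

Definition Zprod (n : nat) (K : {set 'I_n}) : Op n := \prod_(j in K) PauliZ j.

Definition sumZ (n : nat) : Op n := \sum_(j < n) PauliZ j.

Definition U1_invariant (n : nat) (A : Op n) : Prop := A *m sumZ n = sumZ n *m A.

Definition adjoint (N : nat) (A : 'M[C]_N) : 'M[C]_N := map_mx conjc A^T.

Definition is_hermitian (N : nat) (A : 'M[C]_N) : Prop := adjoint A = A.

Definition piecewise_continuous (f : R -> R) (T : R) : Prop :=
  exists (m : nat) (p : nat -> R),
    p 0%N = R0 /\ p m = T /\
    (forall i, (i < m)%N -> Rlt (p i) (p i.+1)) /\
    (forall i, (i < m)%N ->
       (forall x, Rlt (p i) x /\ Rlt x (p i.+1) -> continuous f x) /\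
       (exists l : R, filterlim f (at_right (p i)) (locally l)) /\
       (exists l : R, filterlim f (at_left (p i.+1)) (locally l))).

Definition mx_piecewise_continuous (N : nat) (H : R -> 'M[C]_N) (T : R) : Prop :=
  forall i j, piecewise_continuous (fun t => complex.Re (H t i j)) T /\
              piecewise_continuous (fun t => complex.Im (H t i j)) T.

Definition mx_is_derive (N : nat) (U : R -> 'M[C]_N) (t : R) (D : 'M[C]_N) : Prop :=
  forall i j, is_derive (fun s => complex.Re (U s i j)) t (complex.Re (D i j)) /\
              is_derive (fun s => complex.Im (U s i j)) t (complex.Im (D i j)).

Definition mx_continuous_on_0T (N : nat) (U : R -> 'M[C]_N) (T : R) : Prop :=
  forall t, Rle R0 t /\ Rle t T -> forall i j,
    filterlim (fun s => complex.Re (U s i j)) (within (fun s => Rle R0 s /\ Rle s T) (locally t))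
              (locally (complex.Re (U t i j))) /\
    filterlim (fun s => complex.Im (U s i j)) (within (fun s => Rle R0 s /\ Rle s T) (locally t))
              (locally (complex.Im (U t i j))).

(* V = T exp(-i \int_0^T H(t) dt): V = U(T), where U is the (unique) continuous
   solution on [0,T] of the Schroedinger equation U'(t) = -i H(t) U(t), U(0) = 1,
   the equation holding at all but finitely many t in (0,T). *)
Definition time_ordered_exp (N : nat) (H : R -> 'M[C]_N) (T : R) (V : 'M[C]_N) : Prop :=
  exists U : R -> 'M[C]_N,
    U R0 = 1%:M /\ U T = V /\ mx_continuous_on_0T U T /\
    exists bad : list R, forall t, Rlt R0 t /\ Rlt t T -> ~ In t bad ->
      mx_is_derive U t (- ('i *: (H t *m U t))).

(* restriction V_m of V to the range of Pi_m, written in the computational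
   basis states of weight m *)
Definition weight_states (n m : nat) : {pred 'I_(2 ^ n)} := [pred x | weight x == m].
Arguments weight_states : clear implicits.

Definition block (n : nat) (V : Op n) (m : nat) : 'M[C]_#|weight_states n m| :=
  \matrix_(i, j) V (@enum_val _ (weight_states n m) i) (@enum_val _ (weight_states n m) j).

Definition arg (z : C) : R :=
  epsilon (inhabits R0)
    (fun th => (Rlt (Ropp PI) th /\ Rle th PI) /\ z = `|z| * ((cos th)%:C + 'i * (sin th)%:C)).

Definition theta (n : nat) (V : Op n) (m : nat) : R := arg (\det (block V m)).

Definition Delta3 (n : nat) (V : Op n) : R :=
  Rminus (Rminus (theta V n.-1) (theta V 1))
    (Rmult (INR (n - 2)%N) (Rminus (theta V n) (theta V 0))).

Definition eqmod2pi (x y : R) : Prop := exists z : Z, Rminus x y = Rmult (Rmult 2%:R PI) (IZR z).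

From Stdlib Require Import Reals Lra List ClassicalEpsilon.
From mathcomp Require Import all_boot all_algebra all_fingroup.
From mathcomp Require Import Rstruct ring zify.
From Coquelicot Require Import Coquelicot.
From mathcomp.real_closed Require Import complex.

Set Implicit Arguments.
Unset Strict Implicit.
Unset Printing Implicit Defensive.

Section RealAnalysis.

Local Open Scope R_scope.

Lemma eq_of_is_derive0_off_list (f : R -> R) (l : list R) (a b : R) :
  a <= b -> (forall x, a <= x <= b -> continuous f x) ->
  (forall x, a < x < b -> ~ In x l -> is_derive f x 0) -> f a = f b.
Proof.
elim: l a b => [|c l IH] a b Hab Hc Hd.
  have [|x Hx|x [_ Hfx]] := MVT_gen f a b (fun _ => 0).
  - by rewrite Rmin_left ?Rmax_right // => x Hx; apply: Hd.
  - rewrite Rmin_left ?Rmax_right // in Hx.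
    by apply/continuity_pt_filterlim/Hc.
  - lra.
have Hd' x : a < x < b -> x <> c -> ~ In x l -> is_derive f x 0.
  by move=> Hx Hxc Hn; apply: Hd => // -[E|//]; apply: Hxc.
have {}IH u v : a <= u -> u <= v -> v <= b -> ~ (u < c < v) -> f u = f v.
  move=> Hau Huv Hvb Hcuv; apply: IH => // [x Hx|x Hx Hn]; first by apply: Hc; lra.
  apply: Hd' Hn; first lra.
  by move=> E; apply: Hcuv; rewrite -E.
have [Hac|Hac] := Rlt_dec a c; have [Hcb|Hcb] := Rlt_dec c b;
  try by apply: IH; lra.
by rewrite (IH a c) ?(IH c b); lra.
Qed.

Definition clamp (T s : R) : R := Rmax 0 (Rmin s T).

Lemma clamp_in T s : 0 <= T -> 0 <= clamp T s <= T.
Proof. by rewrite /clamp /Rmax /Rmin; case: (Rle_dec s T); case: Rle_dec; lra. Qed.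

Lemma clamp_id T s : 0 <= s <= T -> clamp T s = s.
Proof. by rewrite /clamp /Rmax /Rmin; case: (Rle_dec s T); case: Rle_dec; lra. Qed.

Lemma clamp_lipschitz T x y : 0 <= T -> Rabs (clamp T x - clamp T y) <= Rabs (x - y).
Proof.
rewrite /clamp /Rmax /Rmin /Rabs.
by repeat destruct Rle_dec; repeat destruct Rcase_abs; lra.
Qed.

Lemma locally_interior (t T : R) : 0 < t < T -> locally t (fun s => 0 < s < T).
Proof. exact: (open_and _ _ (open_gt 0) (open_lt T) t). Qed.

Lemma ball_Rabs (x e y : R) : ball x e y <-> Rabs (y - x) < e.
Proof. by []. Qed.

Lemma continuous_clamp T s : 0 <= T -> continuous (clamp T) s.
Proof.
move=> HT; apply/filterlim_locally => eps; exists eps => y /ball_Rabs Hy.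
apply/ball_Rabs; exact: Rle_lt_trans (clamp_lipschitz y s HT) Hy.
Qed.

Lemma continuous_comp_clamp (g : R -> R) T s : 0 <= T ->
  (forall t, 0 <= t <= T ->
     filterlim g (within (fun s => 0 <= s <= T) (locally t)) (locally (g t))) ->
  continuous (fun s => g (clamp T s)) s.
Proof.
move=> HT Hg.
apply: (filterlim_comp _ _ _ _ _ _ (within (fun s => 0 <= s <= T) (locally (clamp T s)))).
  move=> P HP.
  have : locally s (fun x => 0 <= clamp T x <= T -> P (clamp T x)).
    exact: continuous_clamp HT _ HP.
  by apply: filter_imp => x; apply; apply: clamp_in.
exact: Hg (clamp_in s HT).
Qed.

Lemma partition_locate (m : nat) (p : nat -> R) (t : R) :
  (forall i, (i < m)%N -> p i < p i.+1) -> p 0%N <= t <= p m ->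
  t = p 0%N \/ exists2 i, (i < m)%N & p i < t <= p i.+1.
Proof.
elim: m => [|m IH] Hinc Ht; first by left; lra.
have [Hle|Hgt] := Rle_dec t (p m); last by right; exists m; [lia|lra].
have Hinc' i : (i < m)%N -> p i < p i.+1 by move=> Hi; apply: Hinc; lia.
have [->|[i Hi Hti]] := IH Hinc' (conj (proj1 Ht) Hle); first by left.
by right; exists i; first lia.
Qed.

Lemma ex_RInt_continuous_piece (f : R -> R) (c d l1 l2 : R) : c < d ->
  (forall x, c < x < d -> continuous f x) ->
  filterlim f (at_right c) (locally l1) -> filterlim f (at_left d) (locally l2) ->
  ex_RInt f c d.
Proof.
move=> Hcd Hc H1 H2.
have [g [Hg [Hgf _]]] := C0_extension_lt f l1 l2 c d Hcd Hc H1 H2.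
apply: (ex_RInt_ext g) => [x|].
  by rewrite Rmin_left ?Rmax_right; try lra; apply: Hgf.
by apply: ex_RInt_continuous => z _; apply: Hg.
Qed.

Section PiecewiseContinuous.

Variables (f : R -> R) (T : R).
Hypothesis Hf : piecewise_continuous f T.

Lemma piecewise_continuous_ex_RInt t : 0 <= t <= T -> ex_RInt f 0 t.
Proof.
case: Hf => m [p [H0 [HT [Hinc Hpc]]]] Ht.
have Hpiece i : (i < m)%N -> ex_RInt f (p i) (p i.+1).
  move=> Hi; have [Hc [[l1 H1] [l2 H2]]] := Hpc i Hi.
  exact: ex_RInt_continuous_piece (Hinc i Hi) Hc H1 H2.
have Hnodes j : (j <= m)%N -> ex_RInt f 0 (p j).
  elim: j => [|j IH] Hj; first by rewrite H0; apply: ex_RInt_point.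
  by apply: (ex_RInt_Chasles _ _ (p j)); [apply: IH; lia|apply: Hpiece].
have [|->|[i Hi Hti]] := partition_locate (t := t) Hinc; first lra.
  by rewrite H0; apply: ex_RInt_point.
apply: (ex_RInt_Chasles _ _ (p i)); first by apply: Hnodes; lia.
by apply: (ex_RInt_Chasles_1 _ _ _ (p i.+1)); [lra|apply: Hpiece].
Qed.

Lemma piecewise_continuous_continuous_off_list :
  exists l : list R, forall x, 0 < x < T -> ~ In x l -> continuous f x.
Proof.
case: Hf => m [p [H0 [HT [Hinc Hpc]]]].
exists (List.map p (List.seq 0 m.+1)) => x Hx Hn.
have Hnode j : (j <= m)%N -> x <> p j.
  by move=> Hj E; apply: Hn; rewrite E; apply: in_map; apply/in_seq; lia.
have [|E|[i Hi [Hxi1 Hxi2]]] := partition_locate (t := x) Hinc; first lra.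
  by case: (Hnode 0%N).
apply: (proj1 (Hpc i Hi)); split=> //.
by case: Hxi2 => // E; case: (Hnode i.+1).
Qed.

Lemma RInt_lipschitz : 0 <= T -> exists2 M, 0 <= M & forall x y,
  0 <= x <= T -> 0 <= y <= T -> Rabs (RInt f 0 x - RInt f 0 y) <= M * Rabs (x - y).
Proof.
move=> HT.
have [M HM] := ex_RInt_ub _ _ _ (piecewise_continuous_ex_RInt (conj HT (Rle_refl T))).
rewrite Rmin_left ?Rmax_right // in HM.
exists (Rabs M) => [|x y Hx Hy]; first exact: Rabs_pos.
have Ix := piecewise_continuous_ex_RInt Hx; have Iy := piecewise_continuous_ex_RInt Hy.
have Iyx : ex_RInt f y x by apply: (ex_RInt_Chasles _ _ 0) => //; apply: ex_RInt_swap.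
have -> : RInt f 0 x - RInt f 0 y = RInt f y x.
  rewrite -(RInt_Chasles f y 0 x) -?(opp_RInt_swap _ _ _ Iy) //; last exact: ex_RInt_swap.
  by rewrite /plus /opp /=; lra.
rewrite Rmult_comm.
apply: (norm_RInt_le_const_abs f y x (RInt f y x) (Rabs M) _ (RInt_correct _ _ _ Iyx)).
move=> z [Hz1 Hz2]; apply: Rle_trans (RRle_abs M); apply: HM; split.
  by apply: Rle_trans Hz1; apply: Rmin_glb; lra.
by apply: Rle_trans Hz2 _; apply: Rmax_lub; lra.
Qed.

Lemma continuous_RInt_clamp s : 0 <= T -> continuous (fun s => RInt f 0 (clamp T s)) s.
Proof.
move=> HT; have [M HM0 HM] := RInt_lipschitz HT.
apply/filterlim_locally => eps; have eps0 := cond_pos eps.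
set d := eps / (M + 1); have Hd : 0 < d by apply: Rdiv_lt_0_compat; lra.
have Heps : pos eps = (M + 1) * d.
  by rewrite /d Rmult_comm Rmult_assoc Rinv_l ?Rmult_1_r //; apply: Rgt_not_eq; lra.
exists (mkposreal _ Hd) => y /ball_Rabs /= Hy; apply/ball_Rabs.
have := HM _ _ (clamp_in y HT) (clamp_in s HT); have := clamp_lipschitz y s HT.
have := Rabs_pos (clamp T y - clamp T s); nra.
Qed.

Lemma is_derive_RInt_clamp t : 0 < t < T -> continuous f t ->
  is_derive (fun s => RInt f 0 (clamp T s)) t (f t).
Proof.
move=> Ht Hc; apply: (is_derive_RInt f _ 0 t) => //.
apply: filter_imp (locally_interior Ht) => s Hs.
rewrite clamp_id; last lra.
by apply/RInt_correct/piecewise_continuous_ex_RInt; lra.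
Qed.

End PiecewiseContinuous.

Lemma eqmod2piE x y : eqmod2pi x y <-> exists k : Z, x - y = 2 * PI * IZR k.
Proof. by rewrite /eqmod2pi -INRE. Qed.

Lemma cos_sin_eq_mod2pi x y : cos x = cos y -> sin x = sin y -> eqmod2pi x y.
Proof.
move=> Hc Hs; set d := (x - y).
have Hcd : cos d = 1 by rewrite /d cos_minus Hc Hs; have := sin2_cos2 y; rewrite /Rsqr; lra.
have Hs0 : sin (d / 2) = 0.
  have := cos_2a_sin (d / 2); rewrite (_ : (2 * (d / 2)) = d); last by lra.
  by rewrite Hcd => E; apply: Rsqr_0_uniq; rewrite /Rsqr; lra.
have [k Hk] := sin_eq_0_0 _ Hs0; apply/eqmod2piE; exists k; rewrite /d in Hk; lra.
Qed.

Lemma cos_sin_surjective a b : (a * a + b * b = 1) ->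
  exists th, (- PI < th <= PI) /\ cos th = a /\ sin th = b.
Proof.
move=> Hab; have Ha : (-1 <= a <= 1) by nra.
have Hsq : sqrt (1 - a²) = Rabs b.
  by rewrite (_ : (1 - a²) = b²); [apply: sqrt_Rsqr_abs|rewrite /Rsqr; lra].
have [H0 Hpi] := acos_bound a.
have [Hb|Hb] := Rle_dec 0 b.
  exists (acos a); split; first by have := PI_RGT_0; lra.
  by rewrite cos_acos // sin_acos // Hsq Rabs_right //; lra.
exists (- acos a); split; last first.
  by rewrite cos_neg sin_neg cos_acos // sin_acos // Hsq Rabs_left //; lra.
split; last by lra.
have [E|] := Req_dec (acos a) PI; last by lra.
have : a = (-1) by rewrite -(cos_acos a Ha) E cos_PI.
by move=> Ea; rewrite Ea in Hab; nra.
Qed.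

End RealAnalysis.

Local Open Scope ring_scope.
Local Open Scope complex_scope.
Import GRing.Theory.

Definition is_derive_C (f : R -> R[i]) (t : R) (d : R[i]) : Prop :=
  is_derive (fun s => Re (f s)) t (Re d) /\ is_derive (fun s => Im (f s)) t (Im d).

Definition continuous_C (f : R -> R[i]) (t : R) : Prop :=
  continuous (fun s => Re (f s)) t /\ continuous (fun s => Im (f s)) t.

Lemma Re_mul (x y : R[i]) : Re (x * y) = Re x * Re y - Im x * Im y.
Proof. by case: x; case: y. Qed.

Lemma Im_mul (x y : R[i]) : Im (x * y) = Re x * Im y + Im x * Re y.
Proof. by case: x; case: y. Qed.

Definition replace_row (T : Type) (m n : nat) (A B : 'M[T]_(m, n)) (j : 'I_m) :=
  \matrix_(i, k) if i == j then B i k else A i k.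

Section ComplexCalculus.

Variable t : R.
Implicit Types (f g : R -> R[i]) (c d e : R[i]).

Lemma is_derive_C_ext_loc f g d :
  locally t (fun s => f s = g s) -> is_derive_C f t d -> is_derive_C g t d.
Proof.
move=> Hfg [Hre Him]; split.
  by apply: is_derive_ext_loc Hre; apply: filter_imp Hfg => s ->.
by apply: is_derive_ext_loc Him; apply: filter_imp Hfg => s ->.
Qed.

Lemma is_derive_C_ext f g d : (forall s, f s = g s) -> is_derive_C f t d -> is_derive_C g t d.
Proof. by move=> Hfg; apply: is_derive_C_ext_loc; apply: filter_forall. Qed.

Lemma continuous_C_ext f g : (forall s, f s = g s) -> continuous_C f t -> continuous_C g t.
Proof.
move=> Hfg [Hre Him].
by split; [apply: continuous_ext Hre|apply: continuous_ext Him] => s; rewrite Hfg.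
Qed.

Lemma is_derive_C_const c : is_derive_C (fun _ => c) t 0.
Proof. by split; apply: is_derive_const. Qed.

Lemma continuous_C_const c : continuous_C (fun _ => c) t.
Proof. by split; apply: continuous_const. Qed.

Lemma is_derive_C_add f g d e : is_derive_C f t d -> is_derive_C g t e ->
  is_derive_C (fun s => f s + g s) t (d + e).
Proof.
move=> [F1 F2] [G1 G2]; split.
  apply: (is_derive_ext (fun s => Re (f s) + Re (g s))) => [s|]; first by rewrite raddfD.
  by rewrite raddfD; apply: is_derive_plus.
apply: (is_derive_ext (fun s => Im (f s) + Im (g s))) => [s|]; first by rewrite raddfD.
by rewrite raddfD; apply: is_derive_plus.
Qed.

Lemma continuous_C_add f g : continuous_C f t -> continuous_C g t ->
  continuous_C (fun s => f s + g s) t.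
Proof.
move=> [F1 F2] [G1 G2]; split.
  by apply: (continuous_ext (fun s => Re (f s) + Re (g s))) => [s|]; rewrite ?raddfD //;
    apply: continuous_plus.
by apply: (continuous_ext (fun s => Im (f s) + Im (g s))) => [s|]; rewrite ?raddfD //;
  apply: continuous_plus.
Qed.

Lemma is_derive_C_mul f g d e : is_derive_C f t d -> is_derive_C g t e ->
  is_derive_C (fun s => f s * g s) t (d * g t + f t * e).
Proof.
have Hc (x y : R_AbsRing) : mult x y = mult y x by apply: Rmult_comm.
case: d e => [d1 d2] [e1 e2] [F1 F2] [G1 G2]; split.
  apply: (is_derive_ext (fun s => Re (f s) * Re (g s) - Im (f s) * Im (g s))) => [s|].
    by rewrite Re_mul.
  rewrite (_ : Re _ = d1 * Re (g t) + Re (f t) * e1 - (d2 * Im (g t) + Im (f t) * e2)).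
    exact: is_derive_minus (is_derive_mult _ _ _ _ _ F1 G1 Hc) (is_derive_mult _ _ _ _ _ F2 G2 Hc).
  by case: (f t) (g t) => [? ?] [? ?] /=; ring.
apply: (is_derive_ext (fun s => Re (f s) * Im (g s) + Im (f s) * Re (g s))) => [s|].
  by rewrite Im_mul.
rewrite (_ : Im _ = d1 * Im (g t) + Re (f t) * e2 + (d2 * Re (g t) + Im (f t) * e1)).
  exact: is_derive_plus (is_derive_mult _ _ _ _ _ F1 G2 Hc) (is_derive_mult _ _ _ _ _ F2 G1 Hc).
by case: (f t) (g t) => [? ?] [? ?] /=; ring.
Qed.

Lemma continuous_C_mul f g : continuous_C f t -> continuous_C g t ->
  continuous_C (fun s => f s * g s) t.
Proof.
move=> [F1 F2] [G1 G2]; split.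
  apply: (continuous_ext (fun s => Re (f s) * Re (g s) - Im (f s) * Im (g s))) => [s|].
    by rewrite Re_mul.
  exact: continuous_minus (continuous_mult _ _ _ F1 G1) (continuous_mult _ _ _ F2 G2).
apply: (continuous_ext (fun s => Re (f s) * Im (g s) + Im (f s) * Re (g s))) => [s|].
  by rewrite Im_mul.
exact: continuous_plus (continuous_mult _ _ _ F1 G2) (continuous_mult _ _ _ F2 G1).
Qed.

Lemma is_derive_C_conj f d : is_derive_C f t d -> is_derive_C (fun s => conjc (f s)) t (conjc d).
Proof.
case: d => a b [F1 F2]; split; first by apply: is_derive_ext F1 => s; case: (f s).
by apply: (is_derive_ext (fun s => - Im (f s))) (is_derive_opp _ _ _ F2) => s; case: (f s).
Qed.

Lemma continuous_C_conj f : continuous_C f t -> continuous_C (fun s => conjc (f s)) t.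
Proof.
case=> F1 F2; split; first by apply: continuous_ext F1 => s; case: (f s).
by apply: (continuous_ext (fun s => - Im (f s))) (continuous_opp _ _ F2) => s; case: (f s).
Qed.

Lemma is_derive_C_sum (I : Type) (r : seq I) (P : pred I) (F : I -> R -> R[i]) (D : I -> R[i]) :
  (forall i, P i -> is_derive_C (F i) t (D i)) ->
  is_derive_C (fun s => \sum_(i <- r | P i) F i s) t (\sum_(i <- r | P i) D i).
Proof.
move=> HD; elim: r => [|x r IH].
  by rewrite big_nil; apply: is_derive_C_ext (is_derive_C_const 0) => s; rewrite big_nil.
rewrite big_cons; case Px: (P x).
  apply: is_derive_C_ext (is_derive_C_add (HD x Px) IH) => s.
  by rewrite big_cons Px.
by apply: is_derive_C_ext IH => s; rewrite big_cons Px.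
Qed.

Lemma continuous_C_sum (I : Type) (r : seq I) (P : pred I) (F : I -> R -> R[i]) :
  (forall i, P i -> continuous_C (F i) t) ->
  continuous_C (fun s => \sum_(i <- r | P i) F i s) t.
Proof.
move=> HF; elim: r => [|x r IH].
  by apply: continuous_C_ext (continuous_C_const 0) => s; rewrite big_nil.
case Px: (P x).
  by apply: continuous_C_ext (continuous_C_add (HF x Px) IH) => s; rewrite big_cons Px.
by apply: continuous_C_ext IH => s; rewrite big_cons Px.
Qed.

Lemma is_derive_C_prod (I : eqType) (r : seq I) (F : I -> R -> R[i]) (D : I -> R[i]) :
  uniq r -> (forall i, is_derive_C (F i) t (D i)) ->
  is_derive_C (fun s => \prod_(i <- r) F i s) t
    (\sum_(j <- r) \prod_(i <- r) (if i == j then D i else F i t)).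
Proof.
move=> + HD; elim: r => [_|x r IH /andP [xr ur]].
  by rewrite big_nil; apply: is_derive_C_ext (is_derive_C_const 1) => s; rewrite big_nil.
have xj j : j \in r -> (x == j) = false by move=> jr; apply/eqP => E; move: xr; rewrite E jr.
rewrite big_cons big_cons eqxx.
have -> : \prod_(i <- r) (if i == x then D i else F i t) = \prod_(i <- r) F i t.
  by apply: eq_big_seq => i /xj; rewrite eq_sym => ->.
have -> : \sum_(j <- r) \prod_(i <- x :: r) (if i == j then D i else F i t) =
          F x t * \sum_(j <- r) \prod_(i <- r) (if i == j then D i else F i t).
  by rewrite big_distrr; apply: eq_big_seq => j /xj xjF; rewrite big_cons xjF.
by apply: is_derive_C_ext (is_derive_C_mul (HD x) (IH ur)) => s; rewrite big_cons.
Qed.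

Lemma continuous_C_prod (I : Type) (r : seq I) (F : I -> R -> R[i]) :
  (forall i, continuous_C (F i) t) -> continuous_C (fun s => \prod_(i <- r) F i s) t.
Proof.
move=> HF; elim: r => [|x r IH].
  by apply: continuous_C_ext (continuous_C_const 1) => s; rewrite big_nil.
by apply: continuous_C_ext (continuous_C_mul (HF x) IH) => s; rewrite big_cons.
Qed.


Lemma is_derive_C_det (N : nat) (M : R -> 'M[R[i]]_N) (D : 'M[R[i]]_N) :
  (forall i j, is_derive_C (fun s => M s i j) t (D i j)) ->
  is_derive_C (fun s => \det (M s)) t (\sum_(j < N) \det (replace_row (M t) D j)).
Proof.
move=> HD.
have -> : \sum_(j < N) \det (replace_row (M t) D j) =
  \sum_(s : 'S_N) ((-1) ^+ s * \sum_(j <- index_enum 'I_N)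
      \prod_(i <- index_enum 'I_N) (if i == j then D i (s i) else M t i (s i))).
  rewrite exchange_big; apply: eq_bigr => s _; rewrite big_distrr.
  by apply: eq_bigr => j _; congr (_ * _); apply: eq_bigr => i _; rewrite mxE; case: eqP.
rewrite /determinant; apply: is_derive_C_sum => s _.
have := is_derive_C_mul (is_derive_C_const ((-1) ^+ s))
          (is_derive_C_prod (index_enum_uniq _) (fun i => HD i (s i))).
by rewrite mul0r add0r.
Qed.

Lemma continuous_C_det (N : nat) (M : R -> 'M[R[i]]_N) :
  (forall i j, continuous_C (fun s => M s i j) t) -> continuous_C (fun s => \det (M s)) t.
Proof.
move=> HM; rewrite /determinant; apply: continuous_C_sum => s _.
exact: continuous_C_mul (continuous_C_const _) (continuous_C_prod _ _).
Qed.

End ComplexCalculus.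

Lemma is_derive_C_0_eq (f : R -> R[i]) (T : R) (l : list R) : Rle 0 T ->
  (forall s, continuous_C f s) ->
  (forall t, Rlt 0 t /\ Rlt t T -> ~ In t l -> is_derive_C f t 0) -> f 0%R = f T.
Proof.
move=> HT Hc Hd.
have E1 : Re (f 0%R) = Re (f T).
  apply: (@eq_of_is_derive0_off_list (fun s => Re (f s)) l) => // [x _|x Hx Hn]; first by case: (Hc x).
  by case: (Hd x Hx Hn).
have E2 : Im (f 0%R) = Im (f T).
  apply: (@eq_of_is_derive0_off_list (fun s => Im (f s)) l) => // [x _|x Hx Hn]; first by case: (Hc x).
  by case: (Hd x Hx Hn).
by move: E1 E2; case: (f 0%R) (f T) => ? ? [? ?] /= -> ->.
Qed.

Definition expi (th : R) : R[i] := (cos th)%:C + 'i * (sin th)%:C.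

Lemma expiE th : expi th = (cos th) +i* (sin th).
Proof. by rewrite [RHS]complexE. Qed.

Lemma expi0 : expi 0 = 1.
Proof. by rewrite expiE cos_0 sin_0. Qed.

Lemma expiD x y : expi x * expi y = expi (Rplus x y).
Proof. by rewrite !expiE /= cos_plus sin_plus !RealsE; congr (_ +i* _); ring. Qed.

Lemma expi_inj_mod2pi x y : expi x = expi y -> eqmod2pi x y.
Proof. by rewrite !expiE => -[]; apply: cos_sin_eq_mod2pi. Qed.

Lemma is_derive_C_expi (phi : R -> R) t d : is_derive phi t d ->
  is_derive_C (fun s => expi (phi s)) t ('i * d%:C * expi (phi t)).
Proof.
move=> Hd; split.
  apply: (is_derive_ext (fun s => cos (phi s))) => [s|]; first by rewrite expiE.
  rewrite (_ : Re _ = d * - sin (phi t)); last by rewrite expiE /=; ring.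
  exact: is_derive_comp (is_derive_cos (phi t)) Hd.
apply: (is_derive_ext (fun s => sin (phi s))) => [s|]; first by rewrite expiE.
rewrite (_ : Im _ = d * cos (phi t)); last by rewrite expiE /=; ring.
exact: is_derive_comp (is_derive_sin (phi t)) Hd.
Qed.

Lemma continuous_C_expi (phi : R -> R) t : continuous phi t ->
  continuous_C (fun s => expi (phi s)) t.
Proof.
move=> Hc; split.
  apply: (continuous_ext (fun s => cos (phi s))) => [s|]; first by rewrite expiE.
  by apply: continuous_comp Hc _; apply/continuity_pt_filterlim/continuity_cos.
apply: (continuous_ext (fun s => sin (phi s))) => [s|]; first by rewrite expiE.
by apply: continuous_comp Hc _; apply/continuity_pt_filterlim/continuity_sin.
Qed.

Definition unimodular (z : R[i]) := z * conjc z = 1.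

Lemma unimodularM z w : unimodular z -> unimodular w -> unimodular (z * w).
Proof. by rewrite /unimodular rmorphM mulrACA => -> ->; rewrite mulr1. Qed.

Lemma unimodular_expi x : unimodular (expi x).
Proof.
rewrite /unimodular expiE /=; have := sin2_cos2 x; rewrite /Rsqr !RealsE => H.
by apply/eqP; rewrite eq_complex /= -H; apply/andP; split; apply/eqP; ring.
Qed.

Lemma unimodular_expi_arg z : unimodular z -> z = expi (arg z).
Proof.
case: z => a b; rewrite /unimodular /= => -[Hab _].
have Hab' : a * a + b * b = 1 by rewrite -Hab; ring.
have Hn : `|a +i* b| = 1 by rewrite normc_def /= !expr2 Hab' Num.Theory.sqrtr1.
have Hex : exists th, (Rlt (- PI) th /\ Rle th PI) /\
    a +i* b = `|a +i* b| * ((cos th)%:C + 'i * (sin th)%:C).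
  have [|th [Hth [Hc Hs]]] := cos_sin_surjective (a := a) (b := b).
    by move: Hab'; rewrite !RealsE.
  by exists th; split; rewrite // Hn mul1r -/(expi th) expiE Hc Hs.
have [_ E] := epsilon_spec (inhabits R0) _ Hex.
by rewrite /arg {1}E Hn mul1r.
Qed.

Lemma arg_mul_expi z phi : unimodular z ->
  eqmod2pi (arg (z * expi phi)) (Rplus (arg z) phi).
Proof.
move=> Hz; apply: expi_inj_mod2pi.
rewrite -expiD -!unimodular_expi_arg //.
exact: unimodularM Hz (unimodular_expi phi).
Qed.

Lemma sum_det_replace_row_mul (F : comNzRingType) (N : nat) (A M : 'M[F]_N) :
  \sum_(j < N) \det (replace_row M (A *m M) j) = \tr A * \det M.
Proof.
rewrite /mxtrace mulr_suml; apply: eq_bigr => j _.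
pose P := \matrix_(i, l) if i == j then A i l else (1%:M : 'M[F]_N) i l.
have -> : replace_row M (A *m M) j = P *m M.
  apply/matrixP => i k; rewrite !mxE; case: eqP => [->|/eqP/negbTE Hij].
    by apply: eq_bigr => l _; rewrite /P mxE eqxx.
  have -> : M i k = (1%:M *m M) i k by rewrite mul1mx.
  by rewrite mxE; apply: eq_bigr => l _; rewrite /P !mxE Hij.
rewrite det_mulmx; congr (_ * _).
rewrite (expand_det_col P j) (bigD1 j) //= big1 ?addr0 => [|i /negbTE Hij]; last first.
  by rewrite /P !mxE Hij mulr0n mul0r.
rewrite /cofactor; have -> : row' j (col' j P) = 1%:M.
  apply/matrixP => a b; rewrite !mxE.
  have /negbTE -> : lift j a != j by rewrite eq_sym neq_lift.
  by rewrite (inj_eq (@lift_inj _ j)).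
by rewrite /P mxE eqxx det1 mulr1 addnn -muln2 exprM sqrr_sign mulr1.
Qed.

Section Qubits.

Variable n : nat.
Implicit Types (A B : Op n) (x y : 'I_(2 ^ n)).

Definition weight_preserving A := forall x y, weight x != weight y -> A x y = 0.

Lemma blockD A B m : block (A + B) m = block A m + block B m.
Proof. by apply/matrixP => i j; rewrite !mxE. Qed.

Lemma blockZ (c : R[i]) A m : block (c *: A) m = c *: block A m.
Proof. by apply/matrixP => i j; rewrite !mxE. Qed.

Lemma blockN A m : block (- A) m = - block A m.
Proof. by apply/matrixP => i j; rewrite !mxE. Qed.

Lemma block1 m : block (1%:M : Op n) m = 1%:M.
Proof. by apply/matrixP => i j; rewrite !mxE (inj_eq enum_val_inj). Qed.

Lemma block_mulmx A B m : weight_preserving A ->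
  block (A *m B) m = block A m *m block B m.
Proof.
move=> HA; apply/matrixP => i j; rewrite !mxE.
rewrite (bigID (mem (weight_states n m))) /= [X in _ + X]big1 ?addr0.
  by rewrite big_enum_val /=; apply: eq_bigr => l _; rewrite !mxE.
move=> x Hx; rewrite HA ?mul0r //.
by have /eqP -> := enum_valP i; apply: contraNneq Hx => ->; rewrite unfold_in /=.
Qed.

Lemma mxtrace_blockE A m : \tr (block A m) = \sum_(x in weight_states n m) A x x.
Proof. by rewrite /mxtrace [RHS]big_enum_val; apply: eq_bigr => i _; rewrite mxE. Qed.

Lemma sumZ_diag : sumZ n = diag_mx (\row_x (n%:R - 2%:R * (weight x)%:R)).
Proof.
apply/matrixP => x y; rewrite /sumZ summxE !mxE.
under eq_bigr do rewrite !mxE.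
rewrite sumrMnl; congr (_ *+ _).
rewrite [LHS](eq_bigr (fun j => 1 - 2%:R * (bit x j : nat)%:R)) => [|j _].
  by rewrite sumrB sumr_const card_ord -big_distrr /= -natr_sum.
by case: (bit x j) => /=; ring.
Qed.

Lemma U1_invariant_weight_preserving A : U1_invariant A -> weight_preserving A.
Proof.
move=> HA x y Hxy; have := congr1 (fun M : Op n => M x y) HA.
rewrite /= sumZ_diag mul_mx_diag mul_diag_mx !mxE => E.
have : A x y * (2%:R * ((weight x)%:R - (weight y)%:R)) =
       A x y * (n%:R - 2%:R * (weight y)%:R) - (n%:R - 2%:R * (weight x)%:R) * A x y.
  by ring.
rewrite E subrr => /eqP; rewrite !mulf_eq0 Num.Theory.pnatr_eq0 /= subr_eq0 Num.Theory.eqr_nat (negbTE Hxy) orbF.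
by move/eqP.
Qed.

Lemma hermitian_diag_real N (A : 'M[R[i]]_N) i : is_hermitian A -> Im (A i i) = 0.
Proof.
move=> /(congr1 (fun M : 'M[R[i]]_N => M i i)); rewrite !mxE.
case: (A i i) => a b /= [] Hb; have : b + b = 0 by rewrite -{1}Hb addNr.
by rewrite -mulr2n -mulr_natr => /eqP; rewrite mulf_eq0 Num.Theory.pnatr_eq0 orbF => /eqP.
Qed.

End Qubits.

Lemma eq_of_bits (n x y : nat) : (x < 2 ^ n)%N -> (y < 2 ^ n)%N ->
  (forall j, (j < n)%N -> odd (x %/ 2 ^ j) = odd (y %/ 2 ^ j)) -> x = y.
Proof.
elim: n x y => [|n IH] x y Hx Hy Hb.
  by move: Hx Hy; rewrite expn0 !ltnS !leqn0 => /eqP -> /eqP ->.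
have H0 := Hb 0%N (ltn0Sn n); rewrite !expn0 !divn1 in H0.
have Hd : (x %/ 2 = y %/ 2)%N.
  apply: IH; rewrite ?ltn_divLR // -?expnSr // => j Hj.
  by rewrite -!divnMA -expnS; apply: Hb.
by rewrite (divn_eq x 2) (divn_eq y 2) Hd !modn2 H0.
Qed.

Lemma prod_diag_mx (F : comPzRingType) (N : nat) (I : Type) (r : seq I) (P : pred I)
    (d : I -> 'rV[F]_N) :
  \prod_(i <- r | P i) diag_mx (d i) = diag_mx (\row_k \prod_(i <- r | P i) d i 0 k).
Proof.
elim: r => [|i r IH]; first by apply/matrixP => a b; rewrite !big_nil !mxE big_nil.
rewrite big_cons IH; case Pi: (P i).
  by rewrite -mulmxE mulmx_diag; congr diag_mx; apply/rowP => k; rewrite !mxE big_cons Pi.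
by congr diag_mx; apply/rowP => k; rewrite !mxE big_cons Pi.
Qed.

Section Bitsets.

Variable n : nat.

Definition bitset (x : 'I_(2 ^ n)) : {set 'I_n} := [set j | bit x j].

Lemma bitset_bij : bijective bitset.
Proof.
apply: inj_card_bij; last by rewrite -(cardsT {set _}) -powersetT card_powerset !cardsT !card_ord.
move=> x y E; apply/val_inj/(@eq_of_bits n); rewrite ?ltn_ord // => j Hj.
by have := congr1 (fun A : {set 'I_n} => Ordinal Hj \in A) E; rewrite /= !inE.
Qed.

Lemma weight_bitset x : weight x = #|bitset x|.
Proof.
rewrite /weight -sum1_card [RHS]big_mkcond /=.
by apply: eq_bigr => j _; rewrite inE; case: bit.
Qed.

Lemma Zprod_diag (K : {set 'I_n}) :
  Zprod K = diag_mx (\row_x ((-1) ^+ #|K :&: bitset x| : R[i])).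
Proof.
rewrite /Zprod /PauliZ prod_diag_mx; congr diag_mx; apply/rowP => x; rewrite !mxE.
rewrite (eq_bigr (fun j => (-1) ^+ (bit x j : nat))) => [|j _]; last by rewrite mxE; case: bit.
rewrite prodrXr -sum1_card big_mkcond [in RHS]big_mkcond /=; congr (_ ^+ _).
by apply: eq_bigr => j _; rewrite !inE; case: (j \in K); case: bit.
Qed.

Definition krawtchouk (K : {set 'I_n}) (m : nat) : int :=
  \sum_(A : {set 'I_n} | #|A| == m) (-1) ^+ #|K :&: A|.

Lemma mxtrace_block_Zprod (K : {set 'I_n}) m : \tr (block (Zprod K) m) = (krawtchouk K m)%:~R.
Proof.
rewrite mxtrace_blockE Zprod_diag /krawtchouk rmorph_sum (reindex bitset); last first.
  by apply: onW_bij; apply: bitset_bij.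
by apply: eq_big => x; rewrite ?unfold_in /= weight_bitset // => _; rewrite !mxE eqxx mulr1n rmorphXn rmorphN1.
Qed.

Lemma krawtchouk0 K : krawtchouk K 0 = 1.
Proof.
rewrite /krawtchouk (big_pred1 set0) => [|A]; last by rewrite /= cards_eq0.
by rewrite setI0 cards0.
Qed.

Lemma krawtchouk_max K : krawtchouk K n = (-1) ^+ #|K|.
Proof.
rewrite /krawtchouk (big_pred1 [set: 'I_n]) => [|A /=]; first by rewrite setIT.
have HA : (#|A| <= n)%N by have := subset_leq_card (subsetT A); rewrite cardsT card_ord.
by rewrite eqEcard subsetT cardsT card_ord /= eqn_leq HA.
Qed.

Lemma sum_card1 (F : {set 'I_n} -> int) :
  \sum_(A : {set 'I_n} | #|A| == 1%N) F A = \sum_(j < n) F [set j].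
Proof.
rewrite (eq_bigl (mem [set [set j] | j : 'I_n])) => [|A]; last first.
  by apply/cards1P/imsetP => [[j ->]|[j _ ->]]; exists j.
by rewrite big_imset //= => i j _ _; apply: set1_inj.
Qed.

Lemma cardsI1 (K : {set 'I_n}) j : #|K :&: [set j]| = (j \in K).
Proof.
have [jK|jK] := boolP (j \in K).
  have /setIidPr -> : [set j] \subset K by rewrite sub1set.
  by rewrite cards1.
have -> : K :&: [set j] = set0.
  by apply/setP => x; rewrite !inE; case: eqP => [->|_]; rewrite ?andbF ?(negbTE jK).
by rewrite cards0.
Qed.

Lemma krawtchouk1 K : krawtchouk K 1 = n%:R - 2%:R * #|K|%:R.
Proof.
rewrite /krawtchouk sum_card1.
rewrite (eq_bigr (fun j => 1 - 2%:R * (j \in K : nat)%:R)) => [|j _]; last first.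
  by rewrite cardsI1; case: (j \in K) => /=; ring.
rewrite sumrB sumr_const card_ord -big_distrr /= -natr_sum -sum1_card [in RHS]big_mkcond.
by congr (_ - _ * _%:R); apply: eq_bigr => j _; case: (j \in K).
Qed.

Lemma krawtchouk_pred K : (0 < n)%N -> krawtchouk K n.-1 = (-1) ^+ #|K| * krawtchouk K 1.
Proof.
move=> Hn; rewrite /krawtchouk (reindex_inj (@setC_inj _)) /=.
rewrite (eq_bigl (fun A : {set 'I_n} => #|A| == 1%N)) => [|A]; last first.
  have := cardsC A; rewrite card_ord => E.
  apply/eqP/eqP => H; last by rewrite -[in RHS]E H add1n.
  by apply/eqP; rewrite -(eqn_add2r n.-1) -H E add1n H prednK.
rewrite !sum_card1 big_distrr /=; apply: eq_bigr => j _.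
rewrite -setDE cardsI1 (cardsD1 j K) exprD mulrAC -exprD addnn -muln2 exprM sqrr_sign.
by rewrite mul1r.
Qed.

End Bitsets.

Lemma det_block_evolution n m T (G : R -> Op n) (W : Op n) : Rle 0 T ->
  (forall t, Rle 0 t /\ Rle t T -> weight_preserving (G t)) ->
  time_ordered_exp G T W ->
  exists (F : R -> R[i]) (l : list R),
    [/\ F 0 = 1, F T = \det (block W m), forall s, continuous_C F s &
      forall t, Rlt 0 t /\ Rlt t T -> ~ In t l ->
        is_derive_C F t (- ('i * \tr (block (G t) m)) * F t)].
Proof.
move=> HT HG [U [U0 [UT [Uc [l Ud]]]]].
exists (fun s => \det (block (U (clamp T s)) m)), l; split.
- by rewrite clamp_id ?U0 ?block1 ?det1 //; split; [apply: Rle_refl|].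
- by rewrite clamp_id ?UT //; split; [|apply: Rle_refl].
- move=> s; apply: continuous_C_det => i j.
  apply: (continuous_C_ext (f := fun s => U (clamp T s) (enum_val i) (enum_val j))) => [s'|].
    by rewrite mxE.
  split.
    apply: (continuous_comp_clamp (g := fun s => Re (U s (enum_val i) (enum_val j)))) => //.
    by move=> t /Uc /(_ (enum_val i) (enum_val j)) [].
  apply: (continuous_comp_clamp (g := fun s => Im (U s (enum_val i) (enum_val j)))) => //.
  by move=> t /Uc /(_ (enum_val i) (enum_val j)) [].
move=> t Ht Hn.
have Ht' : Rle 0 t /\ Rle t T by case: Ht => *; split; apply: Rlt_le.
have Hent i j : is_derive_C (fun s => block (U (clamp T s)) m i j) t
                            (block (- ('i *: (G t *m U t))) m i j).
  apply: (is_derive_C_ext_loc (f := fun s => U s (enum_val i) (enum_val j))).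
    apply: filter_imp (locally_interior Ht) => s Hs.
    by rewrite mxE clamp_id //; case: Hs => *; split; apply: Rlt_le.
  by rewrite mxE; apply: Ud.
have := is_derive_C_det Hent; rewrite clamp_id //.
rewrite blockN blockZ (block_mulmx _ _ (HG t Ht')) (scalemxAl 'i) -mulNmx -scaleNr.
by rewrite sum_det_replace_row_mul mxtraceZ mulNr.
Qed.

Lemma phase_shift (F G : R -> R[i]) (r a : R -> R) (c T : R) (l : list R) :
  Rle 0 T -> piecewise_continuous a T ->
  F 0 = 1 -> G 0 = 1 -> (forall s, continuous_C F s) -> (forall s, continuous_C G s) ->
  (forall t, Rlt 0 t /\ Rlt t T -> ~ In t l ->
     is_derive_C F t (- ('i * (r t)%:C) * F t) /\
     is_derive_C G t (- ('i * (r t + c * a t)%:C) * G t)) ->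
  unimodular (F T) /\ G T = F T * expi (- (c * RInt a 0 T)).
Proof.
move=> HT Ha F0 G0 Fc Gc FGd.
have [la Hac] := piecewise_continuous_continuous_off_list Ha.
pose E s := expi (c * (RInt a 0 (clamp T s) : R)).
have Ec s : continuous_C E s.
  by apply/continuous_C_expi/continuous_mult; [apply: continuous_const|apply: continuous_RInt_clamp].
have Ed t : Rlt 0 t /\ Rlt t T -> ~ In t la -> is_derive_C E t ('i * (c * a t)%:C * E t).
  move=> Ht Hn; apply: is_derive_C_expi.
  apply: (is_derive_scal (fun s => RInt a 0 (clamp T s))).
  exact (is_derive_RInt_clamp Ha Ht (Hac t Ht Hn)).
have ET : E T = expi (c * RInt a 0 T) by rewrite /E clamp_id //; split; [|apply: Rle_refl].
have E0 : E 0 = 1.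
  rewrite /E (_ : RInt a 0 (clamp T 0) = 0 :> R) ?Rmult_0_r ?expi0 //.
  by rewrite clamp_id ?RInt_point //; split; [apply: Rle_refl|].
have HF : unimodular (F T).
  rewrite /unimodular -(@is_derive_C_0_eq (fun s => F s * conjc (F s)) T l) ?F0 ?conjc1 ?mulr1 //.
    by move=> s; apply: continuous_C_mul (Fc s) (continuous_C_conj (Fc s)).
  move=> t Ht Hn; have [Fd _] := FGd t Ht Hn.
  have := is_derive_C_mul Fd (is_derive_C_conj Fd).
  by congr is_derive_C; case: (F t) => u v /=; congr (_ +i* _); ring.
have HQ : G T * conjc (F T) * E T = 1.
  rewrite -(@is_derive_C_0_eq (fun s => G s * conjc (F s) * E s) T (l ++ la)) //.
  - by rewrite F0 G0 E0 conjc1 !mulr1.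
  - move=> s; apply: continuous_C_mul (Ec s).
    exact: continuous_C_mul (Gc s) (continuous_C_conj (Fc s)).
  move=> t Ht Hn; have Hl : ~ In t l by move=> H; apply: Hn; apply: in_or_app; left.
  have Hla : ~ In t la by move=> H; apply: Hn; apply: in_or_app; right.
  have [Fd Gd] := FGd t Ht Hl.
  have := is_derive_C_mul (is_derive_C_mul Gd (is_derive_C_conj Fd)) (Ed t Ht Hla).
  congr is_derive_C; case: (F t) (G t) (E t) => [? ?] [? ?] [? ?] /=.
  by congr (_ +i* _); ring.
have HE : E T * expi (- (c * RInt a 0 T)) = 1.
  by rewrite ET expiD (_ : Rplus _ _ = 0) ?expi0 //; apply: subrr.
split=> //; transitivity (G T * (F T * conjc (F T)) * (E T * expi (- (c * RInt a 0 T)))).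
  by rewrite HF HE !mulr1.
by rewrite -[RHS]mul1r -HQ; ring.
Qed.

Lemma hermitian_mxtrace_block n (A : Op n) m :
  is_hermitian A -> \tr (block A m) = (Re (\tr (block A m)))%:C.
Proof.
move=> HA; rewrite [LHS]complexE (_ : Im _ = 0) ?mulr0 ?addr0 //.
by rewrite mxtrace_blockE raddf_sum big1 // => x _; apply: hermitian_diag_real.
Qed.

Lemma weight_preserving_Zprod n (K : {set 'I_n}) : weight_preserving (Zprod K).
Proof.
move=> x y Hxy; rewrite Zprod_diag !mxE.
by have /negbTE -> : x != y by apply: contraNneq Hxy => ->.
Qed.

Lemma theta_Zprod_shift n m T (H : R -> Op n) (K : {set 'I_n}) (a : R -> R) (V V' : Op n) :
  Rle 0 T ->
  (forall t, Rle 0 t /\ Rle t T -> is_hermitian (H t)) ->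
  (forall t, Rle 0 t /\ Rle t T -> U1_invariant (H t)) ->
  piecewise_continuous a T ->
  time_ordered_exp H T V ->
  time_ordered_exp (fun t => H t + (a t)%:C *: Zprod K) T V' ->
  eqmod2pi (theta V' m) (Rplus (theta V m) (- ((krawtchouk K m)%:~R * RInt a 0 T))).
Proof.
move=> HT Hherm HU1 Ha HV HV'.
have HH t : Rle 0 t /\ Rle t T -> weight_preserving (H t).
  by move=> Ht; apply/U1_invariant_weight_preserving/HU1.
have HH' t : Rle 0 t /\ Rle t T -> weight_preserving (H t + (a t)%:C *: Zprod K).
  move=> Ht x y Hxy; rewrite !mxE (HH t Ht x y Hxy).
  by rewrite (@weight_preserving_Zprod _ K x y Hxy) mulr0 addr0.
have [F [lF [F0 FT Fc Fd]]] := det_block_evolution m HT HH HV.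
have [G [lG [G0 GT Gc Gd]]] := det_block_evolution m HT HH' HV'.
pose r t := Re (\tr (block (H t) m)).
have FGd t : Rlt 0 t /\ Rlt t T -> ~ In t (lF ++ lG) ->
    is_derive_C F t (- ('i * (r t)%:C) * F t) /\
    is_derive_C G t (- ('i * (r t + (krawtchouk K m)%:~R * a t)%:C) * G t).
  move=> Ht Hn; have Ht' : Rle 0 t /\ Rle t T by case: Ht => *; split; apply: Rlt_le.
  have Htr := hermitian_mxtrace_block m (Hherm t Ht').
  split; first by rewrite /r -Htr; apply: Fd => // Hin; apply/Hn/in_or_app; left.
  rewrite (_ : (_ + _)%:C = \tr (block (H t + (a t)%:C *: Zprod K) m)).
    by apply: Gd => // Hin; apply/Hn/in_or_app; right.
  rewrite blockD blockZ mxtraceD mxtraceZ mxtrace_block_Zprod {1}Htr.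
  by rewrite rmorphD rmorphM /= rmorph_int mulrC.
have [HF HG] := phase_shift HT Ha F0 G0 Fc Gc FGd.
by rewrite /theta -FT -GT HG; apply: arg_mul_expi.
Qed.

Section Delta3.

Local Open Scope R_scope.

Lemma Delta3_shift n (V V' : Op n) (c : nat -> R) (A : R) :
  (forall m, eqmod2pi (theta V' m) (theta V m - c m * A)) ->
  eqmod2pi (Delta3 V') (Delta3 V - (c n.-1 - c 1%N - INR (n - 2) * (c n - c 0%N)) * A).
Proof.
move=> Hc.
have Hk m : exists k, theta V' m = theta V m - c m * A + 2 * PI * IZR k.
  by have [k Ek] := proj1 (eqmod2piE _ _) (Hc m); exists k; lra.
have [k0 E0] := Hk 0%N; have [k1 E1] := Hk 1%N.
have [kn En] := Hk n; have [kn1 En1] := Hk n.-1.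
apply/eqmod2piE; exists (Z.sub (Z.sub kn1 k1) (Z.mul (Z.of_nat (n - 2)) (Z.sub kn k0))).
rewrite /Delta3 E0 E1 En En1 !minus_IZR mult_IZR !minus_IZR -INR_IZR_INZ; lra.
Qed.

Lemma krawtchouk_Delta3_coefficient n (K : {set 'I_n}) : (2 <= n)%N ->
  (krawtchouk K n.-1)%:~R - (krawtchouk K 1)%:~R
    - INR (n - 2) * ((krawtchouk K n)%:~R - (krawtchouk K 0)%:~R) =
  if odd #|K| then 4%:R * INR (#|K| - 1) else 0.
Proof.
move=> Hn; rewrite !RealsE krawtchouk_pred ?(leq_trans _ Hn) // krawtchouk_max krawtchouk0.
rewrite krawtchouk1 ?INRE !(rmorphM, rmorphB, rmorphXn, rmorphN1, rmorph1, rmorph_nat) /=.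
rewrite natrB // -signr_odd; case: ifP => Hodd; last by rewrite expr0; ring.
have HK : (1 <= #|K|)%N by case: #|K| Hodd.
by rewrite expr1 natrB // ?RealsE; ring.
Qed.

End Delta3.



Theorem mainTheorem4 (n : nat) (T : R) (H : R -> Op n) (K : {set 'I_n}) (k : nat)
  (a : R -> R) (V V' : Op n) :
  (2 <= n)%N ->
  Rle R0 T ->
  mx_piecewise_continuous H T ->
  (forall t, Rle R0 t /\ Rle t T -> is_hermitian (H t)) ->
  (forall t, Rle R0 t /\ Rle t T -> U1_invariant (H t)) ->
  (1 <= k <= n)%N -> #|K| = k ->
  piecewise_continuous a T ->
  time_ordered_exp H T V ->
  time_ordered_exp (fun t => H t + (a t)%:C *: Zprod K) T V' ->
  (~~ odd k -> eqmod2pi (Delta3 V') (Delta3 V)) /\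
  (odd k -> eqmod2pi (Delta3 V')
                     (Rminus (Delta3 V) (Rmult (Rmult 4%:R (INR (k - 1)%N)) (RInt a R0 T)))).
Proof.
move=> Hn HT _ Hherm HU1 _ <- Ha HV HV'.
have /= := Delta3_shift (fun m => theta_Zprod_shift m HT Hherm HU1 Ha HV HV').
rewrite krawtchouk_Delta3_coefficient //.
move=> Hshift; split=> Hodd; move: Hshift; rewrite ?(negbTE Hodd) ?Hodd //.
by rewrite Rmult_0_l Rminus_0_r.
Qed.
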